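(* Let $U$ be a countably infinite universe, $\mathcal{C}=(L_1,L_2,\ldots)$ a countably infinite collection of languages over $U$, let $m^\star(L_i)$ and the orderings $\mathcal{C}'_i$ be as computed by the Procedure described in the context, and fix a non-decreasing $f:\mathbb{N}\to\mathbb{N}$ with $\lim_{t\to\infty}f(t)=\infty$. Then the Algorithm described in the context (with this $f$) non-uniformly generates from $\mathcal{C}$ with generation time $t^\star(L_i)=\max(g(i),m^\star(L_i)+1)$ for every $i$, where $g(i)$ is the smallest $j$ with $f(j)\ge i$; that is, for every $i$, every enumeration of $L_i$, and every $t$ with $|S_t|\ge t^\star(L_i)$, the output $z_t$ belongs to $L_i\setminus S_t$.
   Context: A language is an infinite subset of $U$. A collection is a sequence of languages; repetitions are allowed and entries are distinguished by their index. An enumeration of a language $L$ is a sequence $x_1,x_2,\ldots$ with every $x_t\in L$ and every $x\in L$ equal to some $x_t$. A generating algorithm at each time $t\ge1$ receives $x_1,\ldots,x_t$ and outputs $z_t\in U$; $S_t$ is the set of distinct strings among $x_1,\ldots,x_t$. An algorithm non-uniformly generates from $\mathcal{C}$ with generation times $t(L_i)$ if for every $i$ and every enumeration of $L_i$, $z_t\in L_i\setminus S_t$ whenever $|S_t|\ge t(L_i)$. Procedure. Set $\mathcal{C}'_0=()$. For $i=1,2,3,\ldots$: append the entry $L_i$ at the end of $\mathcal{C}'_{i-1}$ to get $\mathcal{C}'_i=(L'_1,\ldots,L'_i)$ (a permutation of the entries $L_1,\ldots,L_i$), and set $j=i$. Repeat: (1) among all subcollections $\mathcal{D}$ of the entries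 $(L'_1,\ldots,L'_j)$ that include the entry $L'_j$ and satisfy $|\bigcap_{L\in\mathcal{D}}L|<\infty$, let $\mathcal{C}_{\mathrm{chk}}$ be one maximizing $|\bigcap_{L\in\mathcal{D}}L|$ and $m_{\mathrm{chk}}$ this maximum; if no such $\mathcal{D}$ exists, set $\mathcal{C}_{\mathrm{chk}}=()$, $m_{\mathrm{chk}}=0$. (2) If $j\le1$ or $m_{\mathrm{chk}}>m^\star(L'_{j-1})$ (the entry $L'_{j-1}$ has original index $<i$, so its value $m^\star$ is already fixed), stop the loop. (3) Otherwise swap the entries at positions $j-1$ and $j$ in $\mathcal{C}'_i$, set $j\leftarrow j-1$ and return to (1). When the loop stops, set $\mathcal{C}(L_i)=\mathcal{C}_{\mathrm{chk}}$ and $m^\star(L_i)=m_{\mathrm{chk}}$ (these are attached to index $i$). Algorithm (with parameter $f$). At time $t$, run the first $f(t)$ iterations of the Procedure to obtain $\mathcal{C}'_{f(t)}=(L'_1,\ldots,L'_{f(t)})$. Initialize $I_t=()$ and for $j=1,\ldots,f(t)$ in order: if $S_t\subseteq L'_j$ and $|\bigcap_{L\in I_t\cup\{L'_j\}}L|=\infty$, append $L'_j$ to $I_t$. If $I_t$ is empty, output an arbitrary string of $U\setminus S_t$; otherwise output a string of $(\bigcap_{L\in I_t}L)\setminus S_t$. *)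

From mathcomp Require Import all_boot.
From mathcomp Require Import finmap.
From mathcomp Require Import boolp classical_sets cardinality.

Set Implicit Arguments.
Unset Strict Implicit.
Unset Printing Implicit Defensive.

Local Open Scope classical_set_scope.

(* Conventions: the universe is a countable type [U]; the collection is a
   sequence [L : nat -> set U] of which only the entries L 1, L 2, ... are
   used (index 0 is ignored).  Times are t = 1, 2, ...; an input sequence is
   [x : nat -> U] of which x 1, x 2, ... are used. *)

Section Defs.
Variable U : countType.
Variable L : nat -> set U.

Definition inter (D : seq nat) : set U := fun u => forall k, k \in D -> L k u.

Definition fcard (A : set U) : nat := #|` fset_set A|.

(* m_chk for the entry with index [i] placed right after the entries [q]:
   maximum of |\bigcap D| over subcollections D of (q, i) containing i whose
   intersection is finite; 0 if no such D *)
Definition mchk (q : seq nat) (i : nat) : nat :=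
  \max_(b : (size q).-tuple bool | `[< finite_set (inter (i :: mask b q)) >])
     fcard (inter (i :: mask b q)).

(* The swap loop for the new entry i, the previous ordering being [p]
   (a list of original indices) with already fixed values [ms].  [bubble k]
   is the loop when the new entry is at position j = k+1 (k entries before
   it); it returns (final k, m_chk). *)
Fixpoint bubble (p : seq nat) (ms : nat -> nat) (i : nat) (k : nat)
  : nat * nat :=
  match k with
  | 0 => (0, mchk [::] i)
  | k'.+1 =>
      let mc := mchk (take k p) i in
      if ms (nth 0 p k') < mc then (k, mc) else bubble p ms i k'
  end.

(* First n iterations of the Procedure: the ordering C'_n (as the list of
   original indices of L'_1, ..., L'_n) and the values m^*(L_a), a <= n. *)
Fixpoint proc (n : nat) : seq nat * (nat -> nat) :=
  match n with
  | 0 => ([::], fun _ => 0)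
  | n'.+1 =>
      let p := (proc n').1 in
      let ms := (proc n').2 in
      let km := bubble p ms n (size p) in
      (take km.1 p ++ n :: drop km.1 p,
       fun a => if a == n then km.2 else ms a)
  end.

Definition ordering (n : nat) : seq nat := (proc n).1.
Definition mstar (i : nat) : nat := (proc i).2 i.

Definition Sseq (x : nat -> U) (t : nat) : seq U := [seq x k | k <- iota 1 t].
Definition cardS (x : nat -> U) (t : nat) : nat := size (undup (Sseq x t)).

Definition build_I (S : seq U) (p : seq nat) : seq nat :=
  foldl (fun I j =>
           if `[< (forall u, u \in S -> L j u) /\
                  ~ finite_set (inter (rcons I j)) >]
           then rcons I j else I) [::] p.

Definition alg_output (f : nat -> nat) (x : nat -> U) (t : nat) (z : U) : Prop :=
  let S := Sseq x t in
  let I := build_I S (ordering (f t)) in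
  (if I is [::] then True else inter I z) /\ z \notin S.

Definition enumerates (x : nat -> U) (A : set U) : Prop :=
  (forall t, (1 <= t)%N -> A (x t)) /\
  (forall u, A u -> exists2 t, (1 <= t)%N & x t = u).

End Defs.

From Pilot Require Import Defs.
From mathcomp Require Import all_boot finmap.
From mathcomp Require Import boolp classical_sets cardinality.
From mathcomp Require Import zify.

(** The Procedure keeps an invariant on its current ordering: every finite
    intersection of an entry [a] with entries placed before [a] has at most
    [m^*(a)] elements.  Inserting a new entry preserves it, because the entry
    stops where its own [m_chk] bounds these intersections, while every entry
    it was swapped past has an [m^*] value at least the [m_chk] computed at
    that swap.
    From [|S_t| >= g(i)] and the monotonicity of [f] we get [f t >= i], so
    [L_i] is in the ordering used at time [t].  The intersection of [L_i] with
    the entries already in [I_t] contains [S_t]; when [|S_t| > m^*(L_i)] the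
    invariant forces it to be infinite, so [L_i] joins [I_t] and the output
    lies in [L_i]. *)

Section Procedure.
Variables (U : countType) (L : nat -> set U).

Lemma eq_inter D1 D2 : D1 =i D2 -> inter L D1 = inter L D2.
Proof.
by move=> eqD; apply/seteqP; split=> u Du k kD; apply: Du; rewrite ?eqD // -eqD.
Qed.

Lemma fcard_inter_le_mchk q i D : {subset D <= q} ->
  finite_set (inter L (i :: D)) -> Defs.fcard (inter L (i :: D)) <= mchk L q i.
Proof.
move=> sDq finD.
set b := map_tuple (fun y => y \in D) (in_tuple q).
have eqDb : inter L (i :: mask b q) = inter L (i :: D).
  apply: eq_inter => k; rewrite !inE -filter_mask mem_filter /=.
  by case: (boolP (k \in D)) => [kD | _]; rewrite ?(sDq k kD).
rewrite /mchk -eqDb.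
apply: (leq_bigmax_cond (P := fun b : (size q).-tuple bool =>
  `[< finite_set (inter L (i :: mask b q)) >])).
by apply/asboolP; rewrite eqDb.
Qed.

Lemma size_undup_le_fcard (S : seq U) (A : set U) : finite_set A ->
  (forall u, u \in S -> A u) -> size (undup S) <= Defs.fcard A.
Proof.
move=> finA SA; rewrite /Defs.fcard -card_fseq; apply: fsubset_leq_card.
by apply/fsubsetP => u; rewrite in_fset in_fset_set // inE => /SA.
Qed.

Definition prefix_bounded (p : seq nat) (ms : nat -> nat) :=
  forall a, a \in p -> forall D, {subset D <= take (index a p) p} ->
    finite_set (inter L (a :: D)) -> Defs.fcard (inter L (a :: D)) <= ms a.

Lemma bubbleP p ms n K : K <= size p ->
  let r := bubble L p ms n K in
  [/\ r.1 <= K, r.2 = mchk L (take r.1 p) n &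
   forall j, r.1 <= j < K -> mchk L (take j.+1 p) n <= ms (nth 0 p j)].
Proof.
elim: K => [|K IH] leKp /=.
  by split=> //; rewrite take0.
case: ltnP => [_ | le_mchk] /=; first by split=> // j; lia.
have [le_rK -> stop] := IH (ltnW leKp); split=> //; first lia.
move=> j /andP[le_rj]; rewrite ltnS leq_eqVlt => /orP[/eqP -> // | ltjK].
by apply: stop; rewrite le_rj.
Qed.

Section Insert.
Variables (p : seq nat) (n k : nat).
Hypotheses (n_notin_p : n \notin p) (le_kp : (k <= size p)).

Let p' := take k p ++ n :: drop k p.

Lemma index_insert d : index d p' =
  if d == n then k else if (index d p < k) then index d p else (index d p).+1.
Proof.
rewrite /p' index_cat in_take_leq // size_takel //.
have [dn | dn] := eqVneq d n.
  by rewrite dn (memNindex n_notin_p) ltnNge le_kp /= eqxx addn0.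
rewrite /= eq_sym (negbTE dn) addnS.
case: ltnP => [lt_dk | le_kd]; rewrite -[in RHS](cat_take_drop k p) index_cat.
  by rewrite in_take_leq // lt_dk.
by rewrite in_take_leq // ltnNge le_kd size_takel.
Qed.

Lemma ltn_index_insert d a : d != n -> a != n ->
  (index d p' < index a p') = (index d p < index a p).
Proof.
by move=> dn an; rewrite !index_insert (negbTE dn) (negbTE an); do 2 case: ifP => ?; lia.
Qed.

Lemma ltn_index_insert_new_r d : d != n ->
  (index d p' < index n p') = (index d p < k).
Proof. by move=> dn; rewrite !index_insert (negbTE dn) eqxx; case: ifP => ?; lia. Qed.

Lemma ltn_index_insert_new_l a : a != n ->
  (index n p' < index a p') = (k <= index a p).
Proof. by move=> an; rewrite !index_insert (negbTE an) eqxx; case: ifP => ?; lia. Qed.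

Lemma prefix_bounded_insert ms :
  prefix_bounded p ms ->
  (forall j, k <= j < size p -> mchk L (take j.+1 p) n <= ms (nth 0 p j)) ->
  prefix_bounded p' (fun a => if a == n then mchk L (take k p) n else ms a).
Proof.
move=> bnd stop a; rewrite mem_cat inE => a_p' D sD finD.
have before d : d \in D -> index d p' < index a p'.
  by move=> /sD; rewrite in_take_leq ?index_size.
have [ea | an] := eqVneq a n.
  subst a; apply: fcard_inter_le_mchk => // d dD.
  have dn : d != n by apply: contraTneq (before d dD) => ->; rewrite ltnn.
  by rewrite in_take_leq // -ltn_index_insert_new_r // before.
have a_p : a \in p.
  by case/or3P: a_p' => [/mem_take | /eqP ea | /mem_drop] //; rewrite ea eqxx in an.
have [nD | nD] := boolP (n \in D); last first.
  apply: bnd => // d dD; rewrite in_take_leq ?index_size // -ltn_index_insert ?before //.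
  by apply: contraNneq nD => <-.
have le_ka : k <= index a p by rewrite -ltn_index_insert_new_l // before.
set D' := a :: [seq d <- D | d != n].
have eqD : inter L (a :: D) = inter L (n :: D').
  apply: eq_inter => d; rewrite !inE mem_filter.
  by have [-> | _] := eqVneq d n; rewrite ?nD ?orbT.
rewrite eqD in finD *.
(* The loop swapped [n] past [a], so it found [mchk (take j.+1 p) n <= ms a]
   at [j = index a p], and [D'] lies in [take j.+1 p]. *)
have -> : ms a = ms (nth 0 p (index a p)) by rewrite nth_index.
apply: leq_trans (stop (index a p) _); last by rewrite le_ka index_mem.
apply: fcard_inter_le_mchk => // d.
rewrite inE mem_filter in_take_leq ?index_mem // ltnS.
case/orP=> [/eqP -> // | /andP[dn dD]].
by apply: ltnW; rewrite -ltn_index_insert // before.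
Qed.

End Insert.

Lemma mem_proc n a : (a \in (proc L n).1) = (1 <= a <= n).
Proof.
elim: n => [|n IH] /=; first by rewrite in_nil; lia.
by rewrite mem_cat inE orbCA -mem_cat cat_take_drop IH; lia.
Qed.

Lemma proc_mstar n a : 1 <= a <= n -> (proc L n).2 a = mstar L a.
Proof.
elim: n => [|n IH] rng; first lia.
rewrite /=; have [-> | ne] := eqVneq a n.+1; first by rewrite /mstar /= eqxx.
by apply: IH; lia.
Qed.

Lemma prefix_bounded_proc n : prefix_bounded (proc L n).1 (proc L n).2.
Proof.
elim: n => [|n IH] //=.
set p := (proc L n).1; set ms := (proc L n).2.
have n_notin_p : n.+1 \notin p by rewrite mem_proc ltnn andbF.
have [le_kp -> stop] := bubbleP p ms n.+1 (size p) (leqnn _).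
exact: prefix_bounded_insert.
Qed.

Section Greedy.
Variable S : seq U.

Definition build_step (I : seq nat) (j : nat) :=
  if `[< (forall u, u \in S -> L j u) /\ ~ finite_set (inter L (rcons I j)) >]
  then rcons I j else I.

Lemma build_IE p : build_I L S p = foldl build_step [::] p.
Proof. by []. Qed.

Lemma subset_foldl_build_step s I : {subset I <= foldl build_step I s}.
Proof.
elim: s I => [|j s IH] I d dI //=; apply: IH; rewrite /build_step.
by case: ifP => // _; rewrite mem_rcons inE dI orbT.
Qed.

Lemma mem_foldl_build_step s I d : d \in foldl build_step I s ->
  d \in I \/ d \in s /\ (forall u, u \in S -> L d u).
Proof.
elim: s I => [|j s IH] I /=; first by left.
move/IH => [|[ds SLd]]; last by right; rewrite inE ds orbT.
rewrite /build_step; case: ifP => [/asboolP[SLj _] | _]; last by left.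
by rewrite mem_rcons inE => /orP[/eqP -> | dI]; [right; rewrite inE eqxx | left].
Qed.

Lemma mem_build_I p ms i : prefix_bounded p ms -> i \in p ->
  (forall u, u \in S -> L i u) -> ms i < size (undup S) -> i \in build_I L S p.
Proof.
move=> bnd i_p SLi lt_ms_S.
set q := take (index i p) p; set I := build_I L S q.
have I_elems d : d \in I -> d \in q /\ (forall u, u \in S -> L d u).
  by case/mem_foldl_build_step.
have S_sub_inter u : u \in S -> inter L (i :: I) u.
  move=> uS d; rewrite inE => /orP[/eqP -> | /I_elems[_ SLd]].
    exact: SLi.
  exact: SLd.
have add_i : build_step I i = rcons I i.
  rewrite /build_step asboolT //; split=> // fin_iI.
  have {}fin_iI : finite_set (inter L (i :: I)).
    by move: fin_iI; congr finite_set; apply: eq_inter => d; rewrite mem_rcons.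
  have := bnd i i_p I (fun d dI => (I_elems d dI).1) fin_iI.
  have := size_undup_le_fcard _ _ fin_iI S_sub_inter; lia.
rewrite build_IE -(cat_take_drop (index i p) p) (drop_nth 0) ?index_mem //.
rewrite nth_index // foldl_cat -build_IE -/q -/I /= add_i.
by apply: subset_foldl_build_step; rewrite mem_rcons mem_head.
Qed.

End Greedy.

End Procedure.

Theorem mainTheorem2 (U : countType) (L : nat -> set U) (f : nat -> nat)
  (HU : ~ finite_set [set: U])
  (HL : forall i, (1 <= i)%N -> ~ finite_set (L i))
  (Hf_mono : {homo f : m n / (m <= n)%N >-> (m <= n)%N})
  (Hf_lim : forall M, exists T, forall t, (T <= t)%N -> (M <= f t)%N)
  (z : (nat -> U) -> nat -> U) (* z x t : the output at time t on input x *)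
  (Hz : forall x t, (1 <= t)%N -> alg_output L f x t (z x t)) :
  forall i, (1 <= i)%N ->
  forall gi, (1 <= gi)%N -> (i <= f gi)%N ->
    (forall j, (1 <= j)%N -> (i <= f j)%N -> (gi <= j)%N) ->
  forall x, enumerates x (L i) ->
  forall t, (1 <= t)%N -> (maxn gi (mstar L i).+1 <= cardS x t)%N ->
    L i (z x t) /\ z x t \notin Sseq x t.
Proof.
move=> i i1 gi _ le_i_fgi _ x [xL _] t t1 le_card.
have [out z_notin_S] := Hz x t t1; split=> //.
have le_card_t : cardS x t <= t.
  by rewrite /cardS (leq_trans (size_undup _)) // size_map size_iota.
have le_i_ft : i <= f t by apply: leq_trans le_i_fgi (Hf_mono _ _ _); lia.
have S_sub_Li u : u \in Sseq x t -> L i u.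
  by case/mapP=> k; rewrite mem_iota => /andP[k1 _] ->; apply: xL.
have i_in_I : i \in build_I L (Sseq x t) (ordering L (f t)).
  apply: mem_build_I (prefix_bounded_proc _ _ _) _ S_sub_Li _.
    by rewrite mem_proc i1.
  by rewrite proc_mstar ?i1 //; move: le_card; rewrite /cardS; lia.
by move: out i_in_I; case: build_I => // a I out; apply: out.
Qed.
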